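(* $\mathsf{LKur}\subseteq\mathsf{GKur}$.
   Context: $\mathsf{MIPC}$ is the smallest set of formulas in the bimodal language $\mathcal{L}_{\forall\exists}$ containing all theorems of $\mathsf{IPC}$; $\forall(p\wedge q)\leftrightarrow(\forall p\wedge\forall q)$, $\forall p\to p$, $\forall p\to\forall\forall p$; $\exists(p\vee q)\leftrightarrow(\exists p\vee\exists q)$, $p\to\exists p$, $\exists\exists p\to\exists p$, $(\exists p\wedge\exists q)\to\exists(\exists p\wedge q)$; $\exists\forall p\to\forall p$, $\exists p\to\forall\exists p$; closed under modus ponens, substitution and $\varphi/\forall\varphi$. $\mathsf{Kur}=\mathsf{MIPC}+\forall\neg\neg p\to\neg\neg\forall p$. $\mathsf{MS4}$ is the smallest set of formulas in the classical bimodal language $\mathcal{L}_{\Box\forall}$ containing all classical tautologies, the $\mathsf{S4}$ axioms for $\Box$, the $\mathsf{S5}$ axioms for $\forall$, and $\Box\forall p\to\forall\Box p$, closed under modus ponens, substitution, $\Box$- and $\forall$-necessitation; $\Diamond=\neg\Box\neg$. $\mathsf{LKur}=\mathsf{MS4}+\Box\forall\Diamond\Box p\to\Diamond\forall p$. $\mathsf{GKur}=\mathsf{MS4}+\{\varphi^t:\mathsf{Kur}\vdash\varphi\}$, with Gödel translation $\bot^t=\bot$, $p^t=\Box p$, $(\varphi\wedge\psi)^t=\varphi^t\wedge\psi^t$, $(\varphi\vee\psi)^t=\varphi^t\vee\psi^t$, $(\varphi\to\psi)^t=\Box(\neg\varphi^t\vee\psi^t)$, $(\forall\varphi)^t=\Box\forall\varphi^t$,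 $(\exists\varphi)^t=\neg\forall\neg\varphi^t$. *)

Inductive iform : Type :=
| IVar : nat -> iform
| IBot : iform
| IAnd : iform -> iform -> iform
| IOr  : iform -> iform -> iform
| IImp : iform -> iform -> iform
| IAll : iform -> iform
| IEx  : iform -> iform.

Definition INeg (a : iform) : iform := IImp a IBot.
Definition IIff (a b : iform) : iform := IAnd (IImp a b) (IImp b a).

Fixpoint isubst (s : nat -> iform) (a : iform) : iform :=
  match a with
  | IVar n => s n
  | IBot => IBot
  | IAnd a b => IAnd (isubst s a) (isubst s b)
  | IOr a b => IOr (isubst s a) (isubst s b)
  | IImp a b => IImp (isubst s a) (isubst s b)
  | IAll a => IAll (isubst s a)
  | IEx a => IEx (isubst s a)
  end.

Inductive ipc_axiom : iform -> Prop :=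
| ipcK  : forall a b, ipc_axiom (IImp a (IImp b a))
| ipcS  : forall a b c, ipc_axiom
    (IImp (IImp a (IImp b c)) (IImp (IImp a b) (IImp a c)))
| ipcA1 : forall a b, ipc_axiom (IImp (IAnd a b) a)
| ipcA2 : forall a b, ipc_axiom (IImp (IAnd a b) b)
| ipcA3 : forall a b, ipc_axiom (IImp a (IImp b (IAnd a b)))
| ipcO1 : forall a b, ipc_axiom (IImp a (IOr a b))
| ipcO2 : forall a b, ipc_axiom (IImp b (IOr a b))
| ipcO3 : forall a b c, ipc_axiom
    (IImp (IImp a c) (IImp (IImp b c) (IImp (IOr a b) c)))
| ipcEFQ : forall a, ipc_axiom (IImp IBot a).

Definition ip : iform := IVar 0.
Definition iq : iform := IVar 1.

Inductive mipc_axiom : iform -> Prop :=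
| mA1 : mipc_axiom (IIff (IAll (IAnd ip iq)) (IAnd (IAll ip) (IAll iq)))
| mA2 : mipc_axiom (IImp (IAll ip) ip)
| mA3 : mipc_axiom (IImp (IAll ip) (IAll (IAll ip)))
| mE1 : mipc_axiom (IIff (IEx (IOr ip iq)) (IOr (IEx ip) (IEx iq)))
| mE2 : mipc_axiom (IImp ip (IEx ip))
| mE3 : mipc_axiom (IImp (IEx (IEx ip)) (IEx ip))
| mE4 : mipc_axiom (IImp (IAnd (IEx ip) (IEx iq)) (IEx (IAnd (IEx ip) iq)))
| mM1 : mipc_axiom (IImp (IEx (IAll ip)) (IAll ip))
| mM2 : mipc_axiom (IImp (IEx ip) (IAll (IEx ip))).

Inductive mipc_ext (ax : iform -> Prop) : iform -> Prop :=
| me_ipc : forall a, ipc_axiom a -> mipc_ext ax a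
| me_mod : forall a, mipc_axiom a -> mipc_ext ax a
| me_ax  : forall a, ax a -> mipc_ext ax a
| me_mp  : forall a b, mipc_ext ax (IImp a b) -> mipc_ext ax a -> mipc_ext ax b
| me_sub : forall s a, mipc_ext ax a -> mipc_ext ax (isubst s a)
| me_nec : forall a, mipc_ext ax a -> mipc_ext ax (IAll a).

Inductive kur_axiom : iform -> Prop :=
| kurA : kur_axiom (IImp (IAll (INeg (INeg ip))) (INeg (INeg (IAll ip)))).

Definition MIPC : iform -> Prop := mipc_ext (fun _ => False).
Definition Kur : iform -> Prop := mipc_ext kur_axiom.

Inductive cform : Type :=
| CVar : nat -> cform
| CBot : cform
| CAnd : cform -> cform -> cform
| COr  : cform -> cform -> cform
| CImp : cform -> cform -> cform
| CBox : cform -> cform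
| CAll : cform -> cform.

Definition CNeg (a : cform) : cform := CImp a CBot.
Definition CDia (a : cform) : cform := CNeg (CBox (CNeg a)).
Definition CEx  (a : cform) : cform := CNeg (CAll (CNeg a)).

Fixpoint csubst (s : nat -> cform) (a : cform) : cform :=
  match a with
  | CVar n => s n
  | CBot => CBot
  | CAnd a b => CAnd (csubst s a) (csubst s b)
  | COr a b => COr (csubst s a) (csubst s b)
  | CImp a b => CImp (csubst s a) (csubst s b)
  | CBox a => CBox (csubst s a)
  | CAll a => CAll (csubst s a)
  end.

Inductive cpc_axiom : cform -> Prop :=
| cpcK  : forall a b, cpc_axiom (CImp a (CImp b a))
| cpcS  : forall a b c, cpc_axiom
    (CImp (CImp a (CImp b c)) (CImp (CImp a b) (CImp a c)))
| cpcA1 : forall a b, cpc_axiom (CImp (CAnd a b) a)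
| cpcA2 : forall a b, cpc_axiom (CImp (CAnd a b) b)
| cpcA3 : forall a b, cpc_axiom (CImp a (CImp b (CAnd a b)))
| cpcO1 : forall a b, cpc_axiom (CImp a (COr a b))
| cpcO2 : forall a b, cpc_axiom (CImp b (COr a b))
| cpcO3 : forall a b c, cpc_axiom
    (CImp (CImp a c) (CImp (CImp b c) (CImp (COr a b) c)))
| cpcDN : forall a, cpc_axiom (CImp (CNeg (CNeg a)) a).

Definition cp : cform := CVar 0.
Definition cq : cform := CVar 1.

Inductive ms4_axiom : cform -> Prop :=
| bK : ms4_axiom (CImp (CBox (CImp cp cq)) (CImp (CBox cp) (CBox cq)))
| bT : ms4_axiom (CImp (CBox cp) cp)
| b4 : ms4_axiom (CImp (CBox cp) (CBox (CBox cp)))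
| aK : ms4_axiom (CImp (CAll (CImp cp cq)) (CImp (CAll cp) (CAll cq)))
| aT : ms4_axiom (CImp (CAll cp) cp)
| a5 : ms4_axiom (CImp (CEx cp) (CAll (CEx cp)))
| lBA : ms4_axiom (CImp (CBox (CAll cp)) (CAll (CBox cp))).

Inductive ms4_ext (ax : cform -> Prop) : cform -> Prop :=
| ce_cpc : forall a, cpc_axiom a -> ms4_ext ax a
| ce_mod : forall a, ms4_axiom a -> ms4_ext ax a
| ce_ax  : forall a, ax a -> ms4_ext ax a
| ce_mp  : forall a b, ms4_ext ax (CImp a b) -> ms4_ext ax a -> ms4_ext ax b
| ce_sub : forall s a, ms4_ext ax a -> ms4_ext ax (csubst s a)
| ce_necB : forall a, ms4_ext ax a -> ms4_ext ax (CBox a)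
| ce_necA : forall a, ms4_ext ax a -> ms4_ext ax (CAll a).

Definition MS4 : cform -> Prop := ms4_ext (fun _ => False).

Inductive lkur_axiom : cform -> Prop :=
| lkurA : lkur_axiom
    (CImp (CBox (CAll (CDia (CBox cp)))) (CDia (CAll cp))).

Definition LKur : cform -> Prop := ms4_ext lkur_axiom.

Fixpoint gtr (a : iform) : cform :=
  match a with
  | IVar n => CBox (CVar n)
  | IBot => CBot
  | IAnd a b => CAnd (gtr a) (gtr b)
  | IOr a b => COr (gtr a) (gtr b)
  | IImp a b => CBox (COr (CNeg (gtr a)) (gtr b))
  | IAll a => CBox (CAll (gtr a))
  | IEx a => CNeg (CAll (CNeg (gtr a)))
  end.

Definition GKur : cform -> Prop :=
  ms4_ext (fun c => exists a, Kur a /\ c = gtr a).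


(* The LKur axiom follows in MS4 from the Goedel translation of the Kuroda
   axiom.  Write [tneg A] for [Box (~A \/ Bot)], the translation of
   intuitionistic negation.  Since [Box Dia A -> tneg (tneg A)] and
   [tneg (tneg A) -> Dia A], axiom 4 and [Box forall -> forall Box] turn
   [Box forall Dia Box p] into [Box forall tneg (tneg (Box p))], the
   translated Kuroda axiom gives [tneg (tneg (Box forall Box p))], hence
   [Dia Box forall Box p] and finally [Dia forall p].  All other axioms and
   rules of LKur are shared with GKur. *)

Section HilbertCalculus.

Context {ax : cform -> Prop}.

Notation Thm := (ms4_ext ax).

Lemma thm_mp a b : Thm (CImp a b) -> Thm a -> Thm b.
Proof. intros Hab Ha; exact (ce_mp _ _ _ Hab Ha). Qed.

Lemma thm_K a b : Thm (CImp a (CImp b a)).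
Proof. apply ce_cpc, cpcK. Qed.

Lemma thm_S a b c :
  Thm (CImp (CImp a (CImp b c)) (CImp (CImp a b) (CImp a c))).
Proof. apply ce_cpc, cpcS. Qed.

Lemma imp_weaken h a : Thm a -> Thm (CImp h a).
Proof. intro Ha; exact (thm_mp _ _ (thm_K a h) Ha). Qed.

Lemma imp_mp h a b :
  Thm (CImp h (CImp a b)) -> Thm (CImp h a) -> Thm (CImp h b).
Proof. intros Hab Ha; exact (thm_mp _ _ (thm_mp _ _ (thm_S h a b) Hab) Ha). Qed.

Lemma imp_refl a : Thm (CImp a a).
Proof. exact (imp_mp _ _ _ (thm_K a (CImp a a)) (thm_K a a)). Qed.

Lemma imp_trans a b c : Thm (CImp a b) -> Thm (CImp b c) -> Thm (CImp a c).
Proof. intros Hab Hbc; exact (imp_mp _ _ _ (imp_weaken a _ Hbc) Hab). Qed.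

Lemma imp_postcompose a b c : Thm (CImp b c) -> Thm (CImp (CImp a b) (CImp a c)).
Proof.
  intro Hbc.
  apply (imp_mp _ _ _ (imp_mp _ _ _ (imp_weaken _ _ (thm_S a b c))
                                     (imp_weaken _ _ (imp_weaken a _ Hbc)))).
  apply imp_refl.
Qed.

Lemma imp_precompose a b c : Thm (CImp a b) -> Thm (CImp (CImp b c) (CImp a c)).
Proof.
  intro Hab.
  apply (imp_mp _ _ _ (imp_mp _ _ _ (imp_weaken _ _ (thm_S a b c)) (thm_K _ a))).
  apply imp_weaken, Hab.
Qed.

Lemma neg_mono a b : Thm (CImp a b) -> Thm (CImp (CNeg b) (CNeg a)).
Proof. apply imp_precompose. Qed.

Lemma or_introl a b : Thm (CImp a (COr a b)).
Proof. apply ce_cpc, cpcO1. Qed.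

Lemma or_elim a b c : Thm (CImp a c) -> Thm (CImp b c) -> Thm (CImp (COr a b) c).
Proof. intros Hac Hbc; exact (thm_mp _ _ (thm_mp _ _ (ce_cpc _ _ (cpcO3 a b c)) Hac) Hbc). Qed.

Lemma bot_elim a : Thm (CImp CBot a).
Proof. exact (imp_trans _ _ _ (thm_K CBot (CNeg a)) (ce_cpc _ _ (cpcDN a))). Qed.

Lemma or_bot_elim a : Thm (CImp (COr a CBot) a).
Proof. exact (or_elim _ _ _ (imp_refl a) (bot_elim a)). Qed.

Lemma neg_or_imp a b : Thm (CImp (COr (CNeg a) b) (CImp a b)).
Proof. exact (or_elim _ _ _ (imp_postcompose _ _ _ (bot_elim b)) (thm_K b a)). Qed.

Definition subst2 (a b : cform) (n : nat) : cform :=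
  match n with 0 => a | 1 => b | _ => CVar n end.

Lemma ms4_axiom_inst2 a b c : ms4_axiom c -> Thm (csubst (subst2 a b) c).
Proof. intro Hc; exact (ce_sub _ _ _ (ce_mod _ _ Hc)). Qed.

Lemma box_K a b : Thm (CImp (CBox (CImp a b)) (CImp (CBox a) (CBox b))).
Proof. exact (ms4_axiom_inst2 a b _ bK). Qed.

Lemma box_T a : Thm (CImp (CBox a) a).
Proof. exact (ms4_axiom_inst2 a a _ bT). Qed.

Lemma box_4 a : Thm (CImp (CBox a) (CBox (CBox a))).
Proof. exact (ms4_axiom_inst2 a a _ b4). Qed.

Lemma all_K a b : Thm (CImp (CAll (CImp a b)) (CImp (CAll a) (CAll b))).
Proof. exact (ms4_axiom_inst2 a b _ aK). Qed.

Lemma box_all_all_box a : Thm (CImp (CBox (CAll a)) (CAll (CBox a))).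
Proof. exact (ms4_axiom_inst2 a a _ lBA). Qed.

Lemma box_mono a b : Thm (CImp a b) -> Thm (CImp (CBox a) (CBox b)).
Proof. intro Hab; exact (thm_mp _ _ (box_K a b) (ce_necB _ _ Hab)). Qed.

Lemma all_mono a b : Thm (CImp a b) -> Thm (CImp (CAll a) (CAll b)).
Proof. intro Hab; exact (thm_mp _ _ (all_K a b) (ce_necA _ _ Hab)). Qed.

Lemma dia_mono a b : Thm (CImp a b) -> Thm (CImp (CDia a) (CDia b)).
Proof. intro Hab; apply neg_mono, box_mono, neg_mono, Hab. Qed.

Lemma gtr_imp_elim a b : Thm (gtr (IImp a b)) -> Thm (CImp (gtr a) (gtr b)).
Proof.
  intro Hab.
  exact (thm_mp _ _ (neg_or_imp _ _) (thm_mp _ _ (box_T _) Hab)).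
Qed.

(* [gtr (INeg a)] is [tneg (gtr a)] by conversion. *)
Definition tneg (a : cform) : cform := CBox (COr (CNeg a) CBot).

Lemma box_dia_tneg_tneg a : Thm (CImp (CBox (CDia a)) (tneg (tneg a))).
Proof.
  apply box_mono.
  apply (imp_trans _ _ _ (neg_mono _ _ (box_mono _ _ (or_bot_elim _)))).
  apply or_introl.
Qed.

Lemma tneg_tneg_dia a : Thm (CImp (tneg (tneg a)) (CDia a)).
Proof.
  apply (imp_trans _ _ _ (box_T _)), (imp_trans _ _ _ (or_bot_elim _)).
  apply neg_mono, box_mono, or_introl.
Qed.

Lemma ms4_ext_mono (ax' : cform -> Prop) :
  (forall c, ax c -> ms4_ext ax' c) -> forall c, Thm c -> ms4_ext ax' c.
Proof.
  intros Hax c Hc; induction Hc.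
  - apply ce_cpc; assumption.
  - apply ce_mod; assumption.
  - apply Hax; assumption.
  - eapply ce_mp; eassumption.
  - apply ce_sub; assumption.
  - apply ce_necB; assumption.
  - apply ce_necA; assumption.
Qed.

End HilbertCalculus.

Lemma GKur_gtr a : Kur a -> GKur (gtr a).
Proof. intro Ha; apply ce_ax; exists a; split; [exact Ha | reflexivity]. Qed.

Lemma GKur_gtr_kurA :
  GKur (CImp (CBox (CAll (tneg (tneg (CBox cp)))))
             (tneg (tneg (CBox (CAll (CBox cp)))))).
Proof. apply (gtr_imp_elim _ _ (GKur_gtr _ (me_ax _ _ kurA))). Qed.

Lemma GKur_lkur_axiom c : lkur_axiom c -> GKur c.
Proof.
  intros [].
  apply (imp_trans _ _ _ (box_4 _)).
  apply (imp_trans _ _ _ (box_mono _ _ (box_all_all_box _))).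
  apply (imp_trans _ _ _ (box_mono _ _ (all_mono _ _ (box_dia_tneg_tneg _)))).
  apply (imp_trans _ _ _ GKur_gtr_kurA).
  apply (imp_trans _ _ _ (tneg_tneg_dia _)).
  apply dia_mono, (imp_trans _ _ _ (box_T _)), all_mono, box_T.
Qed.

Theorem lemma4p7 : forall phi : cform, LKur phi -> GKur phi.
Proof. exact (ms4_ext_mono _ GKur_lkur_axiom). Qed.
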